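(* Let $\alpha\colon\mathbb{R}\to\mathbb{R}$ be continuous and suppose $S_\alpha$ is a graphical strip over $K$. Then $\frac{\alpha(w_2)-\alpha(w_1)}{w_2-w_1}\ge-1$ for all $w_1<w_2$ if and only if there is a function $\sigma\colon\mathbb{R}\to\mathbb{R}$ such that $-2\le\frac{\sigma(z_2)-\sigma(z_1)}{z_2-z_1}<2$ for all $z_1<z_2$ and $$S_\alpha=\bigcup_{z\in\mathbb{R}}[(-1,-\sigma(z),z),(1,\sigma(z),z)].$$
   Context: $\mathbb{H}$ is $\mathbb{R}^3$ with product $(x,y,z)\cdot(x',y',z')=(x+x',y+y',z+z'+\frac{xy'-yx'}{2})$; $Y^t=(0,t,0)$. A horizontal line is a set $\{p\cdot tv:t\in\mathbb{R}\}$, $v=(a,b,0)\neq0$; a ruled surface is a union of horizontal segments (rulings) with endpoints in its boundary. $V_0=\{(x,0,z)\}$; for $D\subset V_0$, $f\colon D\to\mathbb{R}$, $\Gamma_f=\{u\cdot Y^{f(u)}\}$. A graphical strip over $D$ is an intrinsic graph of a continuous function on $D$ which is ruled and all of whose rulings meet the $z$-axis. $K=\{(x,0,z):|x|\le1\}$. For continuous $\alpha$: $\eta(w)=w+\frac{\alpha(w)}2$ and $S_\alpha=\bigcup_w[(-1,-\alpha(w),\eta(w)),(1,\alpha(w),\eta(w))]$, $[p_1,p_2]$ the line segment. *)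

From Stdlib Require Import Reals Lra.
Open Scope R_scope.

(* Points of the Heisenberg group H = R^3. *)
Record H3 := mkH { hx : R; hy : R; hz : R }.

Definition hmul (p q : H3) : H3 :=
  mkH (hx p + hx q) (hy p + hy q)
      (hz p + hz q + (hx p * hy q - hy p * hx q) / 2).

Definition hset := H3 -> Prop.
Definition set_eq (S T : hset) : Prop := forall p, S p <-> T p.

Definition segment (p1 p2 : H3) : hset := fun p =>
  exists t, 0 <= t <= 1 /\
    p = mkH (hx p1 + t * (hx p2 - hx p1))
            (hy p1 + t * (hy p2 - hy p1))
            (hz p1 + t * (hz p2 - hz p1)).

(* K = {(x,0,z) : |x| <= 1} ⊂ V_0, parametrized by (x,z). *)
Definition inK (x z : R) : Prop := Rabs x <= 1.

(* Continuity of f : K -> R (f given as a function of the coordinates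
   (x,z) of u = (x,0,z) in V_0; only the values on K matter). *)
Definition continuous_on_K (f : R -> R -> R) : Prop :=
  forall x z, inK x z -> forall eps, 0 < eps -> exists delta, 0 < delta /\
    forall x' z', inK x' z' -> Rabs (x' - x) < delta -> Rabs (z' - z) < delta ->
      Rabs (f x' z' - f x z) < eps.

Definition intrinsic_graph_K (f : R -> R -> R) : hset := fun p =>
  exists x z, inK x z /\ p = hmul (mkH x 0 z) (mkH 0 (f x z) 0).

Definition hline_pt (p : H3) (v1 v2 t : R) : H3 := hmul p (mkH (t * v1) (t * v2) 0).

(* S (a surface over K) is ruled, with all rulings meeting the z-axis:
   every point of S lies on a horizontal segment
   {p0 . (t v) : a <= t <= b} (v = (v1,v2,0) <> 0, a < b) contained in S,
   whose endpoints lie in the boundary of S (the part of S over the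
   boundary {|x| = 1} of K), and which meets the z-axis. *)
Definition ruled_rulings_meet_zaxis_K (S : hset) : Prop :=
  forall p, S p -> exists (p0 : H3) (v1 v2 a b : R),
    (v1 <> 0 \/ v2 <> 0) /\ a < b /\
    (exists t, a <= t <= b /\ p = hline_pt p0 v1 v2 t) /\
    (forall t, a <= t <= b -> S (hline_pt p0 v1 v2 t)) /\
    Rabs (hx (hline_pt p0 v1 v2 a)) = 1 /\
    Rabs (hx (hline_pt p0 v1 v2 b)) = 1 /\
    (exists t, a <= t <= b /\ hx (hline_pt p0 v1 v2 t) = 0
                           /\ hy (hline_pt p0 v1 v2 t) = 0).

Definition graphical_strip_K (S : hset) : Prop :=
  (exists f, continuous_on_K f /\ set_eq S (intrinsic_graph_K f)) /\
  ruled_rulings_meet_zaxis_K S.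

Definition eta (alpha : R -> R) (w : R) : R := w + alpha w / 2.

Definition S_alpha (alpha : R -> R) : hset := fun p =>
  exists w, segment (mkH (-1) (- alpha w) (eta alpha w))
                    (mkH 1 (alpha w) (eta alpha w)) p.

Definition S_sigma (sigma : R -> R) : hset := fun p =>
  exists z, segment (mkH (-1) (- sigma z) z) (mkH 1 (sigma z) z) p.

From Stdlib Require Import Reals Lra.
From Coquelicot Require Import Rcomplements.
Open Scope R_scope.

(** The segment of [S_alpha alpha] indexed by [w] lies at height [eta alpha w].
    Hence [S_alpha alpha = S_sigma sigma] forces [sigma (eta w) = alpha w]
    (compare right endpoints), and conversely this equality of strips holds
    for [sigma := alpha o eta^-1] as soon as [eta] is a bijection.  With
    increments [dw], [da] of [w], [alpha] and [dz = dw + da / 2] of [eta],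
    the slope of [sigma] is [da / dz], and [-2 <= da / dz < 2] with [dz > 0]
    is equivalent to [da >= - dw] with [dw > 0].  If [alpha] has slopes
    [>= -1], then [eta] has slopes [>= 1/2] and, being continuous, is a
    bijection of [R] by the intermediate value theorem. *)

Definition slope (f : R -> R) (x y : R) : R := (f y - f x) / (y - x).

Lemma slope_ge_iff (f : R -> R) {x y : R} (c : R) :
  x < y -> c <= slope f x y <-> c * (y - x) <= f y - f x.
Proof. intro Hxy; apply iff_sym, Rle_div_r; lra. Qed.

Lemma slope_lt_iff (f : R -> R) {x y : R} (c : R) :
  x < y -> slope f x y < c <-> f y - f x < c * (y - x).
Proof. intro Hxy; apply Rlt_div_l; lra. Qed.

Section Expanding.

Context {f : R -> R} {k : R}.
Hypothesis k_gt0 : 0 < k.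
Hypothesis f_expanding : forall x y, x < y -> k * (y - x) <= f y - f x.

Lemma expanding_lt {x y : R} : x < y -> f x < f y.
Proof.
intro Hxy; pose proof (f_expanding _ _ Hxy).
assert (0 < k * (y - x)) by (apply Rmult_lt_0_compat; lra); lra.
Qed.

Lemma expanding_lt_inv {x y : R} : f x < f y -> x < y.
Proof.
intro Hf; destruct (Rtotal_order x y) as [Hxy | [-> | Hyx]]; [exact Hxy | lra |].
pose proof (expanding_lt Hyx); lra.
Qed.

Lemma expanding_inj {x y : R} : f x = f y -> x = y.
Proof.
intro Hf; destruct (Rtotal_order x y) as [Hxy | [Hxy | Hyx]]; [| exact Hxy |].
- pose proof (expanding_lt Hxy); lra.
- pose proof (expanding_lt Hyx); lra.
Qed.

Lemma expanding_surj (z : R) : continuity f -> {w : R | f w = z}.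
Proof.
intro Hc.
set (M := (Rabs (z - f 0) + 1) / k).
pose proof (Rle_abs (z - f 0)); pose proof (Rabs_maj2 (z - f 0)).
assert (HkM : k * M = Rabs (z - f 0) + 1) by (unfold M; field; lra).
assert (HM : 0 < M) by (apply Rdiv_lt_0_compat; lra).
assert (Hright : k * (M - 0) <= f M - f 0) by (apply f_expanding; lra).
assert (Hleft : k * (0 - - M) <= f 0 - f (- M)) by (apply f_expanding; lra).
assert (Hc' : continuity (fun w => f w - z)).
{ apply continuity_minus; [exact Hc |].
  apply continuity_const; intros ? ?; reflexivity. }
destruct (IVT _ (- M) M Hc') as [w [_ Hw]]; [lra | lra | lra |].
exists w; lra.
Qed.

Lemma expanding_bijection :
  continuity f -> {g : R -> R | (forall z, f (g z) = z) /\ (forall w, g (f w) = w)}.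
Proof.
intro Hc.
exists (fun z => proj1_sig (expanding_surj z Hc)).
assert (Hfg : forall z, f (proj1_sig (expanding_surj z Hc)) = z)
  by (intro z; exact (proj2_sig (expanding_surj z Hc))).
split; [exact Hfg |].
intro w; apply expanding_inj, Hfg.
Qed.

End Expanding.

Lemma eta_continuity {alpha : R -> R} : continuity alpha -> continuity (eta alpha).
Proof.
intro Hc; unfold eta.
apply continuity_plus; [exact (derivable_continuous id derivable_id) |].
unfold Rdiv; apply continuity_mult; [exact Hc |].
apply continuity_const; intros ? ?; reflexivity.
Qed.

Lemma eta_expanding {alpha : R -> R} :
  (forall w1 w2, w1 < w2 -> -1 <= slope alpha w1 w2) ->
  forall w1 w2, w1 < w2 -> / 2 * (w2 - w1) <= eta alpha w2 - eta alpha w1.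
Proof.
intros Ha w1 w2 Hw.
pose proof (proj1 (slope_ge_iff alpha (-1) Hw) (Ha _ _ Hw)).
unfold eta; lra.
Qed.

Lemma S_alpha_eq_S_sigma_reparam {alpha g : R -> R} :
  (forall z, eta alpha (g z) = z) -> (forall w, g (eta alpha w) = w) ->
  set_eq (S_alpha alpha) (S_sigma (fun z => alpha (g z))).
Proof.
intros Hetag Hgeta p; split.
- intros [w Hp]; exists (eta alpha w); rewrite Hgeta; exact Hp.
- intros [z Hp]; exists (g z); rewrite Hetag; exact Hp.
Qed.

Lemma S_alpha_eq_S_sigma_endpoint {alpha sigma : R -> R} :
  set_eq (S_alpha alpha) (S_sigma sigma) -> forall w, sigma (eta alpha w) = alpha w.
Proof.
intros Heq w.
destruct (proj1 (Heq (mkH 1 (alpha w) (eta alpha w)))) as [z [t [Ht E]]].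
- exists w, 1; split; [lra |]; simpl; f_equal; ring.
- injection E as Ex Ey Ez.
  assert (t = 1) as -> by lra.
  assert (z = eta alpha w) as -> by lra.
  lra.
Qed.

Section Reparametrization.

Context {alpha sigma : R -> R}.
Hypothesis sigma_eta : forall w, sigma (eta alpha w) = alpha w.

Lemma sigma_slope_bounds {w1 w2 : R} :
  w1 < w2 -> -1 <= slope alpha w1 w2 ->
  -2 <= slope sigma (eta alpha w1) (eta alpha w2) < 2.
Proof.
intros Hw Ha; apply slope_ge_iff in Ha; [| exact Hw].
assert (Hz : eta alpha w1 < eta alpha w2) by (unfold eta; lra).
rewrite slope_ge_iff, slope_lt_iff, !sigma_eta by exact Hz.
unfold eta; lra.
Qed.

Lemma alpha_slope_ge {w1 w2 : R} :
  (forall z1 z2, z1 < z2 -> -2 <= slope sigma z1 z2 < 2) ->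
  w1 < w2 -> -1 <= slope alpha w1 w2.
Proof.
intros Hs Hw; apply slope_ge_iff; [exact Hw |].
destruct (Rtotal_order (eta alpha w1) (eta alpha w2)) as [Hz | [Hz | Hz]].
- pose proof (proj1 (slope_ge_iff sigma (-2) Hz) (proj1 (Hs _ _ Hz))) as H.
  rewrite !sigma_eta in H; unfold eta in *; lra.
- pose proof (f_equal sigma Hz) as H; rewrite !sigma_eta in H.
  unfold eta in Hz; lra.
- pose proof (proj1 (slope_lt_iff sigma 2 Hz) (proj2 (Hs _ _ Hz))) as H.
  rewrite !sigma_eta in H; unfold eta in *; lra.
Qed.

End Reparametrization.

Theorem lemma3p4 (alpha : R -> R) :
  continuity alpha ->
  graphical_strip_K (S_alpha alpha) ->
  ((forall w1 w2, w1 < w2 -> (alpha w2 - alpha w1) / (w2 - w1) >= -1) <->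
   exists sigma : R -> R,
     (forall z1 z2, z1 < z2 ->
        -2 <= (sigma z2 - sigma z1) / (z2 - z1) < 2) /\
     set_eq (S_alpha alpha) (S_sigma sigma)).
Proof.
intros Hc _; split.
- intro Ha.
  assert (Ha' : forall w1 w2, w1 < w2 -> -1 <= slope alpha w1 w2)
    by (intros w1 w2 Hw; apply Rge_le, Ha, Hw).
  assert (Hk : 0 < / 2) by lra.
  destruct (expanding_bijection Hk (eta_expanding Ha') (eta_continuity Hc))
    as [g [Hetag Hgeta]].
  exists (fun z => alpha (g z)); split; [| exact (S_alpha_eq_S_sigma_reparam Hetag Hgeta)].
  intros z1 z2 Hz.
  change (-2 <= slope (fun z => alpha (g z)) z1 z2 < 2).
  rewrite <- (Hetag z1), <- (Hetag z2) in Hz |- *.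
  assert (Hw : g z1 < g z2) by exact (expanding_lt_inv Hk (eta_expanding Ha') Hz).
  apply sigma_slope_bounds; [| exact Hw | exact (Ha' _ _ Hw)].
  intro w; rewrite Hgeta; reflexivity.
- intros [sigma [Hs Heq]] w1 w2 Hw.
  apply Rle_ge, (alpha_slope_ge (S_alpha_eq_S_sigma_endpoint Heq) Hs Hw).
Qed.
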